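(* Let $K\ge 2$, $m\in\{1,\dots,K-1\}$, $M=\frac{m}{K}$, and $L\in\{1,\dots,K-1\}$. For integers $0\le j\le m+1$ define $$R_K(M,L,j)=1+\frac{\sum_{i=\max(0,m-L+1)}^{\min(j-1,K-L)}\binom{K-L}{i}\binom{L-1}{m-i}+\sum_{i=\max(j,m-L)}^{\min(m,K-L-1)}\binom{K-L-1}{i}\binom{L}{m-i}}{\binom{K}{m}}.$$ Then there exists a minimizer $j^*\in\arg\min_{0\le j\le m+1}R_K(M,L,j)$ satisfying $j^*=\left\lceil m\left(1-\frac{L}{K}\right)\right\rceil$.
   Context: Binomial coefficients $\binom{a}{b}$ are $0$ when $b<0$ or $b>a$, and empty sums (upper limit smaller than lower limit) are $0$. *)

From HB Require Import structures.
From mathcomp Require Import all_boot all_order all_algebra.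
Set Implicit Arguments. Unset Strict Implicit. Unset Printing Implicit Defensive.
Import Order.TTheory GRing.Theory Num.Theory.

(* Integer summation bounds are translated to nat ranges:
   i from max(0, m-L+1) to min(j-1, K-L) inclusive  ==  [ (m+1-L) , minn j (K-L+1) )
   i from max(j, m-L) to min(m, K-L-1) inclusive    ==  [ maxn j (m-L) , minn (m+1) (K-L) )
   (truncated nat subtraction coincides with max with 0; empty ranges give 0). *)
Definition R_K (K m L j : nat) : rat :=
  1 + ((\sum_((m.+1 - L) <= i < minn j (K - L).+1) 'C(K - L, i) * 'C(L - 1, m - i)
        + \sum_(maxn j (m - L) <= i < minn m.+1 (K - L)) 'C(K - L - 1, i) * 'C(L, m - i))%N%:R
       / ('C(K, m))%:R).

From HB Require Import structures.
From mathcomp Require Import all_boot all_order all_algebra.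
From mathcomp Require Import zify ring.
Import Order.TTheory GRing.Theory Num.Theory.

(* Write n = K - L. Up to the affine normalization, R_K(M, L, j) is
   F(j) = sum_(i < j) g(i) + sum_(j <= i <= m) h(i) with
   g(i) = C(n, i) C(L-1, m-i) and h(i) = C(n-1, i) C(L, m-i), so that
   F(j+1) - F(j) = g(j) - h(j). The identities (n-i) C(n, i) = n C(n-1, i) and
   (L-k) C(L, k) = L C(L-1, k) show that g(j) <= h(j) exactly when
   j L <= (m-j) n, i.e. when j K <= m n. Hence F decreases up to
   ceil(m n / K) = ceil(m (1 - L/K)) and increases afterwards. *)

Lemma big_nat_subrange {R : Type} {idx : R} {op : Monoid.law idx}
    (lo hi lo' hi' : nat) (F : nat -> R) :
    lo' <= lo -> hi <= hi' ->
    (forall i, lo' <= i < hi' -> ~~ (lo <= i < hi) -> F i = idx) ->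
  \big[op/idx]_(lo <= i < hi) F i = \big[op/idx]_(lo' <= i < hi') F i.
Proof.
move=> le_lo le_hi F0.
have F0_in a b : lo' <= a -> b <= hi' ->
    (forall i, a <= i < b -> ~~ (lo <= i < hi)) ->
    \big[op/idx]_(a <= i < b) F i = idx.
  move=> le_a le_b out; rewrite big_seq_cond big1 // => i.
  rewrite mem_index_iota andbT => i_ab; apply: F0 (out _ i_ab); lia.
case: (leqP hi lo) => [le_hi_lo | lt_lo_hi].
  by rewrite big_geq // F0_in // => i _; lia.
rewrite [RHS](big_cat_nat (n := lo)) ?(big_cat_nat (m := lo) (n := hi) (p := hi'));
  try lia.
rewrite (F0_in lo' lo) ?(F0_in hi hi') ?Monoid.mul1m ?Monoid.mulm1 //; lia.
Qed.

Lemma leq_sum_nat (a b : nat) (E1 E2 : nat -> nat) :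
  (forall i, a <= i < b -> E1 i <= E2 i) ->
  \sum_(a <= i < b) E1 i <= \sum_(a <= i < b) E2 i.
Proof.
move=> le_E; rewrite big_seq_cond [X in _ <= X]big_seq_cond.
by apply: leq_sum => i /andP[]; rewrite mem_index_iota => /le_E.
Qed.

Definition splice_sum (g h : nat -> nat) (n j : nat) : nat :=
  \sum_(0 <= i < j) g i + \sum_(j <= i < n) h i.

Lemma splice_sum_min (g h : nat -> nat) (n c j : nat) :
    c <= n -> j <= n ->
    (forall i, i < c -> g i <= h i) -> (forall i, c <= i < n -> h i <= g i) ->
  splice_sum g h n c <= splice_sum g h n j.
Proof.
rewrite /splice_sum => le_cn le_jn le_gh le_hg.
case: (leqP j c) => [le_jc | lt_cj].
- rewrite (big_cat_nat (n := j) (p := c)) ?(big_cat_nat (m := j) (n := c) (p := n)) //=.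
  rewrite -addnA leq_add2l leq_add2r.
  by apply: leq_sum_nat => i /andP[_ /le_gh].
- rewrite (big_cat_nat (n := c) (p := j)) ?(big_cat_nat (m := c) (n := j) (p := n));
    try lia.
  rewrite addnA leq_add2r leq_add2l.
  by apply: leq_sum_nat => i /andP[le_ci lt_ij]; apply: le_hg; lia.
Qed.

Lemma leq_mul_bin_shift (a b j k : nat) : 0 < a -> 0 < b -> j * b <= k * a ->
  'C(a, j) * 'C(b.-1, k) <= 'C(a.-1, j) * 'C(b, k).
Proof.
move=> a_gt0 b_gt0 le_jb_ka.
have [le_aj | lt_ja] := leqP a j.
  have : a * b <= a * k.
    by rewrite [a * k]mulnC (leq_trans _ le_jb_ka) // leq_mul2r le_aj orbT.
  by rewrite leq_pmul2l // => le_bk; rewrite [X in _ * X]bin_small ?muln0 //; lia.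
have [le_bk | lt_kb] := leqP b k.
  by rewrite [X in _ * X]bin_small ?muln0 //; lia.
have pos : 0 < (a - j) * (b - k) by rewrite muln_gt0 !subn_gt0 lt_ja.
rewrite -(leq_pmul2l pos) [X in X <= _]mulnACA [X in _ <= X]mulnACA.
rewrite -(mul_bin_down a j) -(mul_bin_down b k).
rewrite [X in X <= _]mulnACA [X in _ <= X]mulnACA leq_mul2r; apply/orP; right.
by rewrite mulnBr mulnBl; apply: leq_sub2l; rewrite [a * k]mulnC.
Qed.

Lemma leq_mulB_mulD (n l m i : nat) : i <= m ->
  (i * l <= (m - i) * n) = (i * (n + l) <= m * n).
Proof. by move=> le_im; rewrite mulnBl mulnDr leq_subRL // leq_mul2r le_im orbT. Qed.

Lemma geq_mulB_mulD (n l m i : nat) :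
  ((m - i) * n <= i * l) = (m * n <= i * (n + l)).
Proof. by rewrite mulnBl leq_subLR mulnDr. Qed.

Lemma ltn_ceil_divn (a b i : nat) : 0 < b -> (i < (a + b.-1) %/ b) = (i * b < a).
Proof. by move=> b_gt0; rewrite -[_ < _]/(i.+1 <= _) leq_divRL // mulSn; lia. Qed.

Lemma ceil_ratio_nat (R : archiRealFieldType) (a b : nat) : 0 < b ->
  (Num.ceil (a%:R / b%:R : R) = ((a + b.-1) %/ b)%N%:Z)%R.
Proof.
move=> b_gt0.
have b_pos : (0 < b%:R :> R)%R by rewrite ltr0n.
apply/eqP; rewrite ceil_eq intrB -pmulrn ltr_pdivlMr // ler_pdivrMr //.
rewrite mulrBl mul1r ltrBlDr -!natrM -natrD ltr_nat ler_nat; apply/andP; split.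
- by have := leq_divM (a + b.-1) b; lia.
- by rewrite leqNgt -ltn_ceil_divn // ltnn.
Qed.

Lemma R_K_splice (K m L j : nat) : 0 < L < K -> j <= m.+1 ->
  R_K K m L j =
  (1 + (splice_sum (fun i => 'C(K - L, i) * 'C(L.-1, m - i))
                   (fun i => 'C((K - L).-1, i) * 'C(L, m - i)) m.+1 j)%N%:R
       / ('C(K, m))%:R)%R.
Proof.
case/andP=> L_gt0 lt_LK le_jm; rewrite /R_K /splice_sum !subn1.
congr (1 + _%:R / _)%R; congr (_ + _); apply: big_nat_subrange; try lia.
all: move=> i i_range /negP out.
- have [lt_i | le_i] := ltnP i (m.+1 - L).
    by rewrite [X in _ * X]bin_small ?muln0 //; lia.
  by rewrite bin_small ?mul0n //; lia.
- have [lt_i | le_i] := ltnP i (m - L).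
    by rewrite [X in _ * X]bin_small ?muln0 //; lia.
  by rewrite bin_small ?mul0n //; lia.
Qed.

Theorem proposition1 (K m L : nat) (hK : (2 <= K)%N)
  (hm1 : (1 <= m)%N) (hm2 : (m <= K - 1)%N)
  (hL1 : (1 <= L)%N) (hL2 : (L <= K - 1)%N) :
  exists jstar : nat,
    [/\ (jstar <= m.+1)%N,
        (forall j : nat, (j <= m.+1)%N -> (R_K K m L jstar <= R_K K m L j)%R)
      & (jstar%:Z = Num.ceil ((m%:R : rat) * (1 - (L%:R : rat) / (K%:R : rat))))%R].
Proof.
have K_gt0 : 0 < K by lia.
have L_range : 0 < L < K by lia.
have K_split : K - L + L = K by rewrite subnK //; lia.
pose c := (m * (K - L) + K.-1) %/ K.
have lt_c i : (i < c) = (i * K < m * (K - L)) by exact: ltn_ceil_divn.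
have le_cm : c <= m by rewrite leqNgt lt_c -leqNgt leq_mul2l leq_subr orbT.
exists c; split; first exact: leqW.
- move=> j le_jm; rewrite !R_K_splice ?(leqW le_cm) //.
  rewrite lerD2l ler_wpM2r ?invr_ge0 ?ler0n // ler_nat.
  apply: splice_sum_min => //; first exact: leqW.
  + move=> i lt_ic; apply: leq_mul_bin_shift; [lia | lia |].
    rewrite leq_mulB_mulD ?K_split; last exact: ltnW (leq_trans lt_ic le_cm).
    by move: lt_ic; rewrite lt_c => /ltnW.
  + move=> i /andP[le_ci _]; rewrite mulnC [X in _ <= X]mulnC.
    apply: leq_mul_bin_shift; [lia | lia |].
    by rewrite geq_mulB_mulD K_split leqNgt -lt_c -leqNgt.
- have -> : (m%:R * (1 - L%:R / K%:R) = (m * (K - L))%N%:R / K%:R :> rat)%R.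
    rewrite natrM natrB; last by lia.
    by field; rewrite pnatr_eq0 -lt0n.
  by rewrite ceil_ratio_nat.
Qed.
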